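(* Let $n\in\mathbb N$ and let $\xi_n:S^1\to M_n(\mathbb C)$ be given by $\xi_n(z)_{ij}=z^{j-i}$ ($1\le i,j\le n$). Then $\xi_n$ is pure in the convex cone $\left(C(S^1)^{(n)}\otimes_{\min}C(S^1)_{(n)}\right)_+$: whenever $\xi_n=y+w$ with $y,w$ in this cone, there is $\lambda\in[0,1]$ with $w=\lambda\xi_n$ and $y=(1-\lambda)\xi_n$.
   Context: $C(S^1)^{(n)}\subseteq M_n(\mathbb C)$ is the space of Toeplitz matrices $[\tau_{k-\ell}]$. $C(S^1)_{(n)}$ is the space of continuous functions $f$ on the unit circle $S^1$ with Fourier coefficients $\hat f(k)=0$ for $|k|\ge n$. $C(S^1)^{(n)}\otimes_{\min}C(S^1)_{(n)}$ is identified with the space of continuous functions $F:S^1\to C(S^1)^{(n)}$ whose entries lie in $C(S^1)_{(n)}$ (with $t\otimes f\leftrightarrow z\mapsto f(z)t$), and its positive cone consists of those $F$ with $F(z)$ positive semidefinite for all $z\in S^1$. Note $\xi_n=\sum_{k=-n+1}^{n-1} r_k\otimes z^{-k}$, where $r_k=s^k$ for $k\ge0$, $r_k=(s^* )^{-k}$ for $k<0$, $s$ the lower-triangular shift matrix. *)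

From HB Require Import structures.
From mathcomp Require Import all_boot all_order all_algebra.
From mathcomp Require Import complex.
From mathcomp Require Import reals.
Set Implicit Arguments. Unset Strict Implicit. Unset Printing Implicit Defensive.
Import Order.TTheory GRing.Theory Num.Theory.
Local Open Scope ring_scope.
Local Open Scope complex_scope.

Definition on_circle (R : realType) (z : R[i]) : Prop := `|z| = 1.

(* C(S^1)_(n): continuous functions on S^1 whose Fourier coefficients vanish
   for |k| >= n, i.e. trigonometric polynomials z |-> sum_{|k|<n} c_k z^k
   (restricted to S^1). *)
Definition trigpoly_deg_lt (R : realType) (n : nat) (f : R[i] -> R[i]) : Prop :=
  exists c : 'I_(2 * n).-1 -> R[i],
    forall z : R[i], on_circle z ->
      f z = \sum_(k < (2 * n).-1) c k * z ^ (k%:Z - (n%:Z - 1)).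

Definition toeplitz (C : Type) (n : nat) (M : 'M[C]_n) : Prop :=
  forall i j i' j' : 'I_n, (i%:Z - j%:Z = i'%:Z - j'%:Z)%R -> M i j = M i' j'.

Definition psd (R : realType) (n : nat) (M : 'M[R[i]]_n) : Prop :=
  forall v : 'cV[R[i]]_n,
    0 <= ((map_mx Num.conj v)^T *m M *m v) ord0 ord0.

(* Positive cone of C(S^1)^(n) (x)_min C(S^1)_(n), viewed as functions
   F : S^1 -> C(S^1)^(n) with entries in C(S^1)_(n) and F(z) >= 0 on S^1. *)
Definition tensor_cone (R : realType) (n : nat) (F : R[i] -> 'M[R[i]]_n) : Prop :=
  [/\ forall z, on_circle z -> toeplitz (F z),
      forall i j : 'I_n, trigpoly_deg_lt n (fun z => F z i j)
    & forall z, on_circle z -> psd (F z)].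

Definition xi (R : realType) (n : nat) (z : R[i]) : 'M[R[i]]_n :=
  \matrix_(i < n, j < n) z ^ (j%:Z - i%:Z).

From HB Require Import structures.
From mathcomp Require Import all_boot all_order all_algebra.
From mathcomp Require Import complex reals.
From mathcomp Require Import ring zify.
Set Implicit Arguments. Unset Strict Implicit. Unset Printing Implicit Defensive.
Import Order.TTheory GRing.Theory Num.Theory.
Local Open Scope ring_scope.

(* For |z| = 1 the matrix xi_n(z) = v v^* with v_i = z^-i has rank one, and
   the vectors z^j e_0 - e_j span the orthogonal complement of v.  A positive
   summand A of xi_n(z) is annihilated by them, which forces
   A = A_00 xi_n(z).  Hence w = c xi_n with c = w_00 a trigonometric polynomial
   of degree < n; the corner entries c z^(n-1) and c z^(1-n) have degree < n
   as well, so c has a single Fourier coefficient and is constant.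
   Positivity of y and w at z = 1 puts c in [0, 1]. *)

Lemma XnM_size_leq_monomial (F : nzRingType) (N : nat) (P Q : {poly F}) :
  (size P <= N.+1)%N -> P = 'X^N * Q -> P = P`_N *: 'X^N.
Proof.
move=> szP PE; apply/polyP => k; rewrite coefZ coefXn.
case: ltngtP => [k_lt_N | N_lt_k | ->]; rewrite ?mulr0 ?mulr1 //.
- by rewrite PE coefXnM k_lt_N.
- by rewrite (leq_sizeP _ _ szP).
Qed.

Section UnitCircle.
Variable C : numClosedFieldType.

Lemma conjC_norm1 (z : C) : `|z| = 1 -> z^* = z^-1.
Proof. by move=> z1; rewrite invC_norm z1 expr1n invr1 mul1r. Qed.

Definition cayley (k : nat) : C := (1 + k%:R * 'i) / (1 - k%:R * 'i).

Lemma cayley_den_neq0 (k : nat) : 1 - k%:R * 'i != 0 :> C.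
Proof.
apply/eqP => den0.
have : (1 - k%:R * 'i) * (1 + k%:R * 'i) = 1 + k%:R ^+ 2 :> C.
  transitivity (1 - k%:R ^+ 2 * 'i ^+ 2 : C); first by ring.
  by rewrite sqrCi mulrN1 opprK.
by rewrite den0 mul0r => /eqP; rewrite eq_sym gt_eqF // ltr_pwDl ?exprn_ge0 ?ler0n.
Qed.

Lemma norm_cayley (k : nat) : `|cayley k| = 1.
Proof.
have conj_num : (1 + k%:R * 'i)^* = 1 - k%:R * 'i :> C.
  by rewrite rmorphD rmorph1 rmorphM rmorph_nat /= conjCi mulrN.
rewrite normf_div -conj_num norm_conjC divff // normr_eq0.
by rewrite -conjC_eq0 conj_num cayley_den_neq0.
Qed.

Lemma cayley_inj : injective cayley.
Proof.
move=> a b /eqP; rewrite eqr_div ?cayley_den_neq0 // => /eqP cross.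
have : (a%:R - b%:R) * ('i *+ 2) =
    (1 + a%:R * 'i) * (1 - b%:R * 'i) - (1 + b%:R * 'i) * (1 - a%:R * 'i) :> C.
  by ring.
rewrite cross subrr => /eqP.
by rewrite mulf_eq0 mulrn_eq0 /= (negbTE (neq0Ci C)) orbF subr_eq0 eqr_nat => /eqP.
Qed.

Lemma poly_unit_circle_eq (P Q : {poly C}) :
  (forall z, `|z| = 1 -> P.[z] = Q.[z]) -> P = Q.
Proof.
move=> PQ; apply/eqP; rewrite -subr_eq0; apply/negPn/negP => PQ_neq0.
set s := [seq cayley k | k <- iota 0 (size (P - Q))].
have roots_s : all (root (P - Q)) s.
  by apply/allP => _ /mapP[k _ ->]; rewrite rootE !hornerE PQ ?subrr ?norm_cayley.
have uniq_s : uniq s by rewrite map_inj_uniq ?iota_uniq //; exact: cayley_inj.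
by have := max_poly_roots PQ_neq0 roots_s uniq_s; rewrite size_map size_iota ltnn.
Qed.

End UnitCircle.

Section HermitianForm.
Variable C : numClosedFieldType.

Lemma ge0_sesqui_conj (p q r : C) :
  (forall t : C, 0 <= t * p + t^* * q + t^* * t * r) -> q = p^*.
Proof.
move=> ge0; pose f t := t * p + t^* * q + t^* * t * r.
have f_real t : (f t)^* - f t = 0.
  by apply/eqP; rewrite subr_eq0 -CrealE; apply: ger0_real; apply: ge0.
have f_conj t : (f t)^* = t^* * p^* + t * q^* + t * t^* * r^*.
  by rewrite /f !rmorphD !rmorphM /= conjCK.
have conjNi : (- 'i)^* = 'i :> C by rewrite rmorphN /= conjCi opprK.
have : 'i *+ 4 * (q^* - p) = 0.
  transitivity ('i * ((f 1)^* - f 1 - ((f (-1))^* - f (-1))) +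
                ((f 'i)^* - f 'i - ((f (- 'i))^* - f (- 'i)))).
    by rewrite !f_conj /f conjNi conjCi rmorphN1; ring.
  by rewrite !f_real !subrr mulr0 addr0.
move=> /eqP; rewrite mulf_eq0 mulrn_eq0 (negbTE (neq0Ci C)) /= subr_eq0 => /eqP <-.
by rewrite conjCK.
Qed.

Lemma ge0_sesqui_lin0 (p q r : C) : 0 <= r ->
  (forall t : C, 0 <= t * p + t^* * q + t^* * t * r) -> p = 0 /\ q = 0.
Proof.
move=> r_ge0 ge0; have qE := ge0_sesqui_conj ge0; subst q.
suff -> : p = 0 by rewrite rmorph0.
pose s := (1 + r)^-1.
have s_gt0 : 0 < s by rewrite invr_gt0 ltr_pwDl.
have sr_lt2 : s * r - 2%:R < 0.
  by rewrite subr_lt0 (@lt_trans _ _ 1) ?ltr1n // mulrC ltr_pdivrMr ?mul1r ?ltr_pwDl.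
have := ge0 (- (s * p^*)).
have -> : - (s * p^*) * p + (- (s * p^*))^* * p^* + (- (s * p^*))^* * - (s * p^*) * r
    = s * (p * p^*) * (s * r - 2%:R).
  by rewrite !(rmorphN, rmorphM) /= conjCK (geC0_conj (ltW s_gt0)); ring.
rewrite nmulr_lge0 // pmulr_rle0 // => pp_le0.
by apply/eqP; rewrite -mul_conjC_eq0 eq_le pp_le0 mul_conjC_ge0.
Qed.

Variable n : nat.

Definition hform (A : 'M[C]_n) (x y : 'cV[C]_n) : C :=
  ((map_mx Num.conj x)^T *m A *m y) ord0 ord0.

Lemma hformDl A x1 x2 y : hform A (x1 + x2) y = hform A x1 y + hform A x2 y.
Proof. by rewrite /hform map_mxD linearD /= !mulmxDl mxE. Qed.

Lemma hformDr A x y1 y2 : hform A x (y1 + y2) = hform A x y1 + hform A x y2.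
Proof. by rewrite /hform !mulmxDr mxE. Qed.

Lemma hformZl A a x y : hform A (a *: x) y = a^* * hform A x y.
Proof. by rewrite /hform map_mxZ linearZ /= -!scalemxAl mxE. Qed.

Lemma hformZr A a x y : hform A x (a *: y) = a * hform A x y.
Proof. by rewrite /hform -!scalemxAr mxE. Qed.

Lemma hformNl A x y : hform A (- x) y = - hform A x y.
Proof. by rewrite -scaleN1r hformZl rmorphN1 mulN1r. Qed.

Lemma hformNr A x y : hform A x (- y) = - hform A x y.
Proof. by rewrite -scaleN1r hformZr mulN1r. Qed.

Lemma hformDm A B x y : hform (A + B) x y = hform A x y + hform B x y.
Proof. by rewrite /hform mulmxDr mulmxDl mxE. Qed.

Lemma hform_delta A i j : hform A (delta_mx i ord0) (delta_mx j ord0) = A i j.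
Proof.
have conj_delta : map_mx Num.conj (delta_mx i ord0 : 'cV[C]_n) = delta_mx i ord0.
  by apply/matrixP => a b; rewrite !mxE rmorph_nat.
by rewrite /hform conj_delta trmx_delta -rowE -colE !mxE.
Qed.

Lemma hform_psd_null A v x : (forall u, 0 <= hform A u u) -> hform A v v = 0 ->
  hform A v x = 0 /\ hform A x v = 0.
Proof.
move=> psdA vv0; apply: ge0_sesqui_lin0 (psdA x) _ => t.
have := psdA (v + t *: x).
by rewrite !(hformDl, hformDr, hformZl, hformZr) vv0 add0r addrA mulrA.
Qed.

End HermitianForm.

Section PositiveSummands.
Variable R : realType.

Lemma on_circle_neq0 (z : R[i]) : on_circle z -> z != 0.
Proof. by rewrite /on_circle -normr_eq0 => ->; rewrite oner_eq0. Qed.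

Lemma psd_diag_ge0 n (A : 'M[R[i]]_n) i : psd A -> 0 <= A i i.
Proof. by move=> psdA; rewrite -hform_delta; apply: psdA. Qed.

Definition xi_kernel_vec N (z : R[i]) (j : 'I_N.+1) : 'cV[R[i]]_N.+1 :=
  z ^+ j *: delta_mx ord0 ord0 - delta_mx j ord0.

Lemma hform_xi_kernel N (z : R[i]) (j : 'I_N.+1) : on_circle z ->
  hform (xi N.+1 z) (xi_kernel_vec z j) (xi_kernel_vec z j) = 0.
Proof.
move=> hz; have zj_neq0 : z ^+ j != 0 by rewrite expf_neq0 ?on_circle_neq0.
have conj_zj : (z ^+ j)^* = (z ^+ j)^-1 by rewrite rmorphXn /= conjC_norm1 ?exprVn.
rewrite /xi_kernel_vec !(hformDl, hformDr, hformNl, hformNr, hformZl, hformZr).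
rewrite !hform_delta !mxE /= !subrr !expr0z subr0 sub0r -exprnN conj_zj -exprnP.
by field.
Qed.

Lemma psd_summand_xi N (z : R[i]) (A B : 'M[R[i]]_N.+1) : on_circle z ->
  psd A -> psd B -> xi N.+1 z = A + B -> A = A ord0 ord0 *: xi N.+1 z.
Proof.
move=> hz psdA psdB xiE; have z_neq0 := on_circle_neq0 hz.
have kerA j x : hform A (xi_kernel_vec z j) x = 0 /\ hform A x (xi_kernel_vec z j) = 0.
  apply: hform_psd_null => //; have := hform_xi_kernel j hz.
  by rewrite xiE hformDm => /eqP; rewrite paddr_eq0 ?psdA ?psdB // => /andP[/eqP].
have colA j k : A k j = z ^+ j * A k ord0.
  have [_] := kerA j (delta_mx k ord0).
  by rewrite /xi_kernel_vec hformDr hformNr hformZr !hform_delta => /eqP; rewrite subr_eq0 => /eqP.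
have rowA j k : A j k = (z ^+ j)^-1 * A ord0 k.
  have [+ _] := kerA j (delta_mx k ord0).
  rewrite /xi_kernel_vec hformDl hformNl hformZl !hform_delta => /eqP; rewrite subr_eq0 => /eqP <-.
  by rewrite rmorphXn /= conjC_norm1 ?exprVn.
apply/matrixP => j k.
by rewrite !mxE rowA colA expfzDr // -exprnN -exprnP; ring.
Qed.

End PositiveSummands.

Section TrigonometricPolynomials.
Variable R : realType.

Lemma eq_trigpoly_deg_lt n (f g : R[i] -> R[i]) :
  (forall z, on_circle z -> f z = g z) -> trigpoly_deg_lt n f -> trigpoly_deg_lt n g.
Proof. by move=> fg [c fE]; exists c => z hz; rewrite -fg ?fE. Qed.

Lemma trigpoly_deg_lt_poly N (f : R[i] -> R[i]) : trigpoly_deg_lt N.+1 f ->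
  exists2 P : {poly R[i]}, (size P <= (2 * N.+1).-1)%N &
    forall z, on_circle z -> z ^+ N * f z = P.[z].
Proof.
case=> c fE; exists (\sum_(k < (2 * N.+1).-1) c k *: 'X^k).
  apply/leq_sizeP => m hm; rewrite coef_sum big1 // => k _.
  by rewrite coefZ coefXn gtn_eqF ?mulr0 // (leq_trans (ltn_ord k)).
move=> z hz; rewrite fE // horner_sum mulr_sumr; apply: eq_bigr => k _.
rewrite hornerZ hornerXn mulrCA exprnP -expfzDr ?on_circle_neq0 //.
by rewrite exprnP; congr (_ * _ ^ _); lia.
Qed.

Lemma trigpoly_deg_lt_const N (c : R[i] -> R[i]) :
  trigpoly_deg_lt N.+1 c ->
  trigpoly_deg_lt N.+1 (fun z => c z * z ^+ N) ->
  trigpoly_deg_lt N.+1 (fun z => c z * z ^- N) ->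
  exists a, forall z, on_circle z -> c z = a.
Proof.
move=> /trigpoly_deg_lt_poly[P _ PE] /trigpoly_deg_lt_poly[Pl szPl PlE].
move=> /trigpoly_deg_lt_poly[Pr _ PrE].
have Pl_XnM : Pl = 'X^N * P.
  apply: poly_unit_circle_eq => z hz.
  by rewrite -PlE // hornerM hornerXn -PE //; ring.
have P_XnM : P = 'X^N * Pr.
  apply: poly_unit_circle_eq => z hz.
  rewrite hornerM hornerXn -PE // -PrE //.
  by field; rewrite expf_neq0 ?on_circle_neq0.
have szP : (size P <= N.+1)%N.
  apply/leq_sizeP => m hm.
  have : Pl`_(m + N) = 0 by apply: (leq_sizeP _ _ szPl); lia.
  by rewrite Pl_XnM coefXnM ltnNge leq_addl /= addnK.
exists P`_N => z hz; apply: (mulfI (expf_neq0 N (on_circle_neq0 hz))).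
by rewrite PE // {1}(XnM_size_leq_monomial szP P_XnM) hornerZ hornerXn mulrC.
Qed.

End TrigonometricPolynomials.

Local Open Scope complex_scope.

Theorem proposition7p9 (R : realType) (n : nat)
    (y w : R[i] -> 'M[R[i]]_n) :
  tensor_cone y -> tensor_cone w ->
  (forall z : R[i], on_circle z -> xi n z = y z + w z) ->
  exists lam : R, [/\ 0 <= lam, lam <= 1,
    forall z : R[i], on_circle z -> w z = lam%:C *: xi n z
    & forall z : R[i], on_circle z -> y z = (1 - lam)%:C *: xi n z].
Proof.
case: n y w => [|N] y w [_ y_trig y_psd] [_ w_trig w_psd] xiE.
  by exists 0; split; rewrite ?lexx ?ler01 // => z _; apply/matrixP => [[]].
have wE z : on_circle z -> w z = w z ord0 ord0 *: xi N.+1 z.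
  by move=> hz; apply: psd_summand_xi (w_psd z hz) (y_psd z hz) _; rewrite // addrC xiE.
have [b bE] : exists b, forall z, on_circle z -> w z ord0 ord0 = b.
  apply: trigpoly_deg_lt_const (w_trig ord0 ord0) _ _.
  - apply: eq_trigpoly_deg_lt (w_trig ord0 ord_max) => z hz.
    by rewrite {1}(wE z hz) !mxE subr0.
  - apply: eq_trigpoly_deg_lt (w_trig ord_max ord0) => z hz.
    by rewrite {1}(wE z hz) !mxE sub0r exprnN.
have {}wE z : on_circle z -> w z = b *: xi N.+1 z by move=> hz; rewrite -(bE z hz) -wE.
have yE z : on_circle z -> y z = (1 - b) *: xi N.+1 z.
  by move=> hz; rewrite scalerBl scale1r -wE // xiE // addrK.
have circle1 : on_circle (1 : R[i]) by rewrite /on_circle normr1.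
have b_ge0 : 0 <= b by rewrite -(bE 1 circle1); apply: psd_diag_ge0 (w_psd 1 circle1).
have b_le1 : 0 <= 1 - b.
  by have := psd_diag_ge0 ord0 (y_psd 1 circle1); rewrite yE // !mxE subrr expr0z mulr1.
have Re_b : (complex.Re b)%:C = b := RRe_real (ger0_real b_ge0).
exists (complex.Re b); split.
- by rewrite -ler0c Re_b.
- by rewrite -lecR Re_b -subr_ge0.
- by move=> z hz; rewrite wE // Re_b.
- by move=> z hz; rewrite yE // rmorphB rmorph1 /= Re_b.
Qed.
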